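(* Fix a reflection matrix $\mathbf\Phi$ and let $(\{\mathbf W_k^\star\}_{k\in\mathcal K},\mathbf R_0^\star)$ be an optimal solution of problem (SDR1.2). Define, for each $k\in\mathcal K$, $$\mathbf w_k^{\mathrm{opt,I}}=(\mathbf h_k^H\mathbf W_k^\star\mathbf h_k)^{-1/2}\,\mathbf W_k^\star\mathbf h_k,\qquad \mathbf R_0^{\mathrm{opt,I}}=\mathbf R_0^\star+\sum_{k\in\mathcal K}\mathbf W_k^\star-\sum_{k\in\mathcal K}\mathbf w_k^{\mathrm{opt,I}}(\mathbf w_k^{\mathrm{opt,I}})^H .$$ Then $\mathbf h_k^H\mathbf W_k^\star\mathbf h_k>0$ for all $k$ (so these are well defined), $\mathbf R_0^{\mathrm{opt,I}}\succeq\mathbf 0$, and $(\{\mathbf w_k^{\mathrm{opt,I}}\},\mathbf R_0^{\mathrm{opt,I}})$ is an optimal solution of problem (P1.1). In particular the relaxation is tight: (P1.1) and (SDR1.2) have the same optimal value.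
   Context: Let $M,N,K\ge1$ be integers and $\mathcal K=\{1,\dots,K\}$. Fixed data: $\mathbf G\in\mathbb C^{N\times M}$, $\mathbf h_{\mathrm d,k}\in\mathbb C^{M}$ and $\mathbf h_{\mathrm r,k}\in\mathbb C^{N}$ for $k\in\mathcal K$, thresholds $\Gamma_k>0$, noise powers $\sigma_k^2>0$, and a power budget $P_0>0$. A reflection matrix is $\mathbf\Phi=\mathrm{diag}(\mathbf v)$ with $\mathbf v\in\mathbb C^N$, $|v_n|=1$ for all $n$. For a given $\mathbf\Phi$ put $\mathbf h_k=\mathbf h_{\mathrm d,k}+\mathbf G^H\mathbf\Phi^H\mathbf h_{\mathrm r,k}$ and $\mathbf H_k=\mathbf h_k\mathbf h_k^H$. For $\mathbf w_1,\dots,\mathbf w_K\in\mathbb C^M$ and Hermitian $\mathbf R_0\succeq\mathbf 0$ in $\mathbb C^{M\times M}$, the Type-I SINR of user $k$ is $$\gamma_k^{\mathrm I}=\frac{|\mathbf h_k^H\mathbf w_k|^2}{\sum_{i\ne k}|\mathbf h_k^H\mathbf w_i|^2+\mathbf h_k^H\mathbf R_0\mathbf h_k+\sigma_k^2},$$ and the power constraint is $\sum_{k}\|\mathbf w_k\|^2+\mathrm{tr}(\mathbf R_0)\le P_0$. For Hermitian $\mathbf X\succeq\mathbf 0$ define $f(\mathbf X)=\mathrm{tr}\big((\mathbf G\mathbf X\mathbf G^H)^{-1}\big)$ if $\mathbf G\mathbf X\mathbf G^H$ is invertible and $f(\mathbf X)=+\infty$ otherwise. Problem (P1.1) (for fixed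 $\mathbf\Phi$): minimize $f\big(\sum_k\mathbf w_k\mathbf w_k^H+\mathbf R_0\big)$ over $\mathbf w_k\in\mathbb C^M$, $\mathbf R_0\succeq\mathbf 0$, subject to $\gamma_k^{\mathrm I}\ge\Gamma_k$ for all $k$ and the power constraint. Problem (SDR1.2) (for fixed $\mathbf\Phi$): minimize $f\big(\sum_k\mathbf W_k+\mathbf R_0\big)$ over Hermitian $\mathbf W_k\succeq\mathbf 0$ ($k\in\mathcal K$) and $\mathbf R_0\succeq\mathbf 0$, subject to $(1+\tfrac1{\Gamma_k})\mathrm{tr}(\mathbf H_k\mathbf W_k)-\mathrm{tr}\big(\mathbf H_k(\sum_{i}\mathbf W_i+\mathbf R_0)\big)\ge\sigma_k^2$ for all $k$, and $\sum_k\mathrm{tr}(\mathbf W_k)+\mathrm{tr}(\mathbf R_0)\le P_0$. *)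

From HB Require Import structures.
From mathcomp Require Import all_boot all_order all_algebra.
Set Implicit Arguments. Unset Strict Implicit. Unset Printing Implicit Defensive.
Import Order.TTheory GRing.Theory Num.Theory.
Local Open Scope ring_scope.

(* Complex scalars: an arbitrary numeric closed field C (e.g. the complex
   numbers); the order on C is the partial order "y - x is a nonnegative real". *)

Section Defs.
Variable C : numClosedFieldType.

Definition ctr (m n : nat) (A : 'M[C]_(m, n)) : 'M[C]_(n, m) :=
  (map_mx Num.conj A)^T.

Definition hermitian (n : nat) (A : 'M[C]_n) : Prop := ctr A = A.

Definition psd (n : nat) (A : 'M[C]_n) : Prop :=
  hermitian A /\ forall x : 'cV[C]_n, 0 <= (ctr x *m A *m x) 0 0.

Definition qf (m n : nat) (x : 'cV[C]_m) (A : 'M[C]_(m, n)) (y : 'cV[C]_n) : C :=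
  (ctr x *m A *m y) 0 0.

Definition norm2 (n : nat) (w : 'cV[C]_n) : C := \sum_i `|w i 0| ^+ 2.

(* extended values: None = +oo *)
Definition ext_le (a b : option C) : Prop :=
  match b with
  | None => True
  | Some y => match a with None => False | Some x => x <= y end
  end.

Definition fobj (N M : nat) (G : 'M[C]_(N, M)) (X : 'M[C]_M) : option C :=
  let Y := G *m X *m ctr G in
  if Y \in unitmx then Some (\tr (invmx Y)) else None.

(* effective channel h_k = h_{d,k} + G^H Phi^H h_{r,k}, Phi = diag(v) *)
Definition heff (N M : nat) (G : 'M[C]_(N, M)) (v : 'rV[C]_N)
  (hd : 'cV[C]_M) (hr : 'cV[C]_N) : 'cV[C]_M :=
  hd + ctr G *m ctr (diag_mx v) *m hr.

Definition unimodular (N : nat) (v : 'rV[C]_N) : Prop := forall n, `|v 0 n| = 1.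

Definition sinrI (M K : nat) (h : 'cV[C]_M) (w : 'I_K -> 'cV[C]_M)
  (R0 : 'M[C]_M) (sigma2 : C) (k : 'I_K) : C :=
  `|qf h 1%:M (w k)| ^+ 2 /
  (\sum_(i < K | i != k) `|qf h 1%:M (w i)| ^+ 2 + qf h R0 h + sigma2).

Definition feasible_P11 (N M K : nat) (G : 'M[C]_(N, M)) (v : 'rV[C]_N)
  (hd : 'I_K -> 'cV[C]_M) (hr : 'I_K -> 'cV[C]_N) (Gamma sigma2 : 'I_K -> C)
  (P0 : C) (w : 'I_K -> 'cV[C]_M) (R0 : 'M[C]_M) : Prop :=
  psd R0 /\
  (forall k, Gamma k <= sinrI (heff G v (hd k) (hr k)) w R0 (sigma2 k) k) /\
  \sum_k norm2 (w k) + \tr R0 <= P0.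

Definition obj_P11 (N M K : nat) (G : 'M[C]_(N, M))
  (w : 'I_K -> 'cV[C]_M) (R0 : 'M[C]_M) : option C :=
  fobj G (\sum_k w k *m ctr (w k) + R0).

Definition optimal_P11 (N M K : nat) (G : 'M[C]_(N, M)) (v : 'rV[C]_N)
  (hd : 'I_K -> 'cV[C]_M) (hr : 'I_K -> 'cV[C]_N) (Gamma sigma2 : 'I_K -> C)
  (P0 : C) (w : 'I_K -> 'cV[C]_M) (R0 : 'M[C]_M) : Prop :=
  feasible_P11 G v hd hr Gamma sigma2 P0 w R0 /\
  forall w' R0', feasible_P11 G v hd hr Gamma sigma2 P0 w' R0' ->
    ext_le (obj_P11 G w R0) (obj_P11 G w' R0').

Definition feasible_SDR (N M K : nat) (G : 'M[C]_(N, M)) (v : 'rV[C]_N)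
  (hd : 'I_K -> 'cV[C]_M) (hr : 'I_K -> 'cV[C]_N) (Gamma sigma2 : 'I_K -> C)
  (P0 : C) (W : 'I_K -> 'M[C]_M) (R0 : 'M[C]_M) : Prop :=
  (forall k, psd (W k)) /\ psd R0 /\
  (forall k,
     let h := heff G v (hd k) (hr k) in
     let Hk := h *m ctr h in
     sigma2 k <= (1 + (Gamma k)^-1) * \tr (Hk *m W k)
                 - \tr (Hk *m (\sum_i W i + R0))) /\
  \sum_k \tr (W k) + \tr R0 <= P0.

Definition obj_SDR (N M K : nat) (G : 'M[C]_(N, M))
  (W : 'I_K -> 'M[C]_M) (R0 : 'M[C]_M) : option C :=
  fobj G (\sum_k W k + R0).

Definition optimal_SDR (N M K : nat) (G : 'M[C]_(N, M)) (v : 'rV[C]_N)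
  (hd : 'I_K -> 'cV[C]_M) (hr : 'I_K -> 'cV[C]_N) (Gamma sigma2 : 'I_K -> C)
  (P0 : C) (W : 'I_K -> 'M[C]_M) (R0 : 'M[C]_M) : Prop :=
  feasible_SDR G v hd hr Gamma sigma2 P0 W R0 /\
  forall W' R0', feasible_SDR G v hd hr Gamma sigma2 P0 W' R0' ->
    ext_le (obj_SDR G W R0) (obj_SDR G W' R0').

Definition wopt (N M K : nat) (G : 'M[C]_(N, M)) (v : 'rV[C]_N)
  (hd : 'I_K -> 'cV[C]_M) (hr : 'I_K -> 'cV[C]_N) (W : 'I_K -> 'M[C]_M)
  (k : 'I_K) : 'cV[C]_M :=
  let h := heff G v (hd k) (hr k) in
  (sqrtC (qf h (W k) h))^-1 *: (W k *m h).

Definition R0opt (N M K : nat) (G : 'M[C]_(N, M)) (v : 'rV[C]_N)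
  (hd : 'I_K -> 'cV[C]_M) (hr : 'I_K -> 'cV[C]_N) (W : 'I_K -> 'M[C]_M)
  (R0 : 'M[C]_M) : 'M[C]_M :=
  R0 + \sum_k W k
     - \sum_k wopt G v hd hr W k *m ctr (wopt G v hd hr W k).

End Defs.

From Pilot Require Import Defs.
From mathcomp Require Import all_boot all_order all_algebra.
From mathcomp Require Import ring.
Import Order.TTheory GRing.Theory Num.Theory.
Local Open Scope ring_scope.

Set Implicit Arguments.
Unset Strict Implicit.
Unset Printing Implicit Defensive.

(* Both problems constrain the same "total covariance" X = sum_k W_k + R_0:
   the objective is f(X), the power is tr X, and each SINR constraint reads
   Gamma_k * (interference_k + sigma_k^2) <= signal_k, where signal_k is
   h_k^H W_k h_k and interference_k = h_k^H X h_k - signal_k.  Hence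
   (1) every beamforming solution (w, R_0) of (P1.1) gives a feasible point
       (w_k w_k^H, R_0) of (SDR1.2) with the same objective value;
   (2) conversely, for a feasible (W, R_0) of (SDR1.2) every signal is
       positive, and the rank-one extraction w_k = a_k^(-1/2) W_k h_k keeps X,
       keeps the signals (|h_k^H w_k|^2 = a_k), and by Cauchy-Schwarz
       satisfies w_k w_k^H <= W_k, so that R_0^opt is positive semidefinite. *)

Section ConjugateTranspose.
Variable C : numClosedFieldType.

Lemma ctrM m n p (A : 'M[C]_(m, n)) (B : 'M[C]_(n, p)) :
  ctr (A *m B) = ctr B *m ctr A.
Proof. by rewrite /ctr map_mxM trmx_mul. Qed.

Lemma ctrK m n (A : 'M[C]_(m, n)) : ctr (ctr A) = A.
Proof. by apply/matrixP=> i j; rewrite /ctr !mxE conjCK. Qed.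

Lemma ctrD m n (A B : 'M[C]_(m, n)) : ctr (A + B) = ctr A + ctr B.
Proof. by apply/matrixP=> i j; rewrite /ctr !mxE rmorphD. Qed.

Lemma ctrN m n (A : 'M[C]_(m, n)) : ctr (- A) = - ctr A.
Proof. by apply/matrixP=> i j; rewrite /ctr !mxE rmorphN. Qed.

Lemma ctrZ m n (c : C) (A : 'M[C]_(m, n)) : ctr (c *: A) = c^* *: ctr A.
Proof. by apply/matrixP=> i j; rewrite /ctr !mxE rmorphM. Qed.

Lemma ctr00 (A : 'M[C]_1) : ctr A 0 0 = (A 0 0)^*.
Proof. by rewrite /ctr !mxE. Qed.

End ConjugateTranspose.

Section QuadraticForms.
Variable C : numClosedFieldType.

Lemma qfD m n (x : 'cV[C]_m) (A B : 'M[C]_(m, n)) y :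
  qf x (A + B) y = qf x A y + qf x B y.
Proof. by rewrite /qf mulmxDr mulmxDl mxE. Qed.

Lemma qfB m n (x : 'cV[C]_m) (A B : 'M[C]_(m, n)) y :
  qf x (A - B) y = qf x A y - qf x B y.
Proof. by rewrite /qf mulmxBr mulmxBl !mxE. Qed.

Lemma qf_sum m n I (r : seq I) (P : pred I) (F : I -> 'M[C]_(m, n)) x y :
  qf x (\sum_(i <- r | P i) F i) y = \sum_(i <- r | P i) qf x (F i) y.
Proof.
elim/big_rec2: _ => [|i a b _ <-]; last by rewrite qfD.
by rewrite /qf mulmx0 mul0mx mxE.
Qed.

Lemma qfDl m n (x z : 'cV[C]_m) (A : 'M[C]_(m, n)) y :
  qf (x + z) A y = qf x A y + qf z A y.
Proof. by rewrite /qf ctrD !mulmxDl mxE. Qed.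

Lemma qfDr m n (x : 'cV[C]_m) (A : 'M[C]_(m, n)) y z :
  qf x A (y + z) = qf x A y + qf x A z.
Proof. by rewrite /qf !mulmxDr mxE. Qed.

Lemma qfZl m n (x : 'cV[C]_m) (A : 'M[C]_(m, n)) c y :
  qf (c *: x) A y = c^* * qf x A y.
Proof. by rewrite /qf ctrZ -!scalemxAl mxE. Qed.

Lemma qfZr m n (x : 'cV[C]_m) (A : 'M[C]_(m, n)) c y :
  qf x A (c *: y) = c * qf x A y.
Proof. by rewrite /qf -scalemxAr mxE. Qed.

Lemma qf_conj m (x y : 'cV[C]_m) (A : 'M[C]_m) :
  Defs.hermitian A -> (qf x A y)^* = qf y A x.
Proof. by move=> hA; rewrite /qf -ctr00 !ctrM ctrK hA mulmxA. Qed.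

Lemma qf_Mr m (x : 'cV[C]_m) (A : 'M[C]_m) y : qf x A y = qf x 1%:M (A *m y).
Proof. by rewrite /qf mulmx1 mulmxA. Qed.

Lemma qf_outer m (x u : 'cV[C]_m) : qf x (u *m ctr u) x = `|qf x 1%:M u| ^+ 2.
Proof.
rewrite normCK /qf mulmx1 mulmxA -(mulmxA (ctr x *m u)) mxE big_ord1.
by rewrite -ctr00 ctrM ctrK.
Qed.

Lemma tr_outer m (h : 'cV[C]_m) (A : 'M[C]_m) : \tr (h *m ctr h *m A) = qf h A h.
Proof. by rewrite -mulmxA mxtrace_mulC /qf /mxtrace big_ord1. Qed.

Lemma tr_outer_norm2 m (w : 'cV[C]_m) : \tr (w *m ctr w) = norm2 w.
Proof.
rewrite mxtrace_mulC /norm2 /mxtrace big_ord1 mxE.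
by apply: eq_bigr => i _; rewrite /ctr !mxE normCK mulrC.
Qed.

Lemma psd_ge0 m (A : 'M[C]_m) x : psd A -> 0 <= qf x A x.
Proof. by case=> _ /(_ x). Qed.

Lemma psd_outer m (u : 'cV[C]_m) : psd (u *m ctr u).
Proof.
split; first by rewrite /Defs.hermitian ctrM ctrK.
by move=> x; rewrite -/(qf _ _ _) qf_outer exprn_ge0.
Qed.

Lemma psdD m (A B : 'M[C]_m) : psd A -> psd B -> psd (A + B).
Proof.
move=> [hA pA] [hB pB]; split; first by rewrite /Defs.hermitian ctrD hA hB.
by move=> x; rewrite -/(qf _ _ _) qfD addr_ge0 // ?pA ?pB.
Qed.

Lemma psd_sum m I (r : seq I) (P : pred I) (F : I -> 'M[C]_m) :
  (forall i, P i -> psd (F i)) -> psd (\sum_(i <- r | P i) F i).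
Proof.
move=> psdF; elim/big_rec: _ => [|i A Pi psdA]; last exact: psdD (psdF i Pi) psdA.
split=> [|x]; last by rewrite mulmx0 mul0mx mxE.
by rewrite /Defs.hermitian; apply/matrixP=> i j; rewrite /ctr !mxE rmorph0.
Qed.

Lemma psd_cauchy_schwarz m (W : 'M[C]_m) x h : psd W -> 0 < qf h W h ->
  `|qf x W h| ^+ 2 <= qf x W x * qf h W h.
Proof.
move=> [hW pW] a_gt0; set a := qf h W h; set b := qf h W x.
have a_real : a^* = a by rewrite geC0_conj // ltW.
have xWh : qf x W h = b^* by rewrite /b qf_conj.
have := pW (a *: x + (- b) *: h); rewrite -/(qf _ _ _).
rewrite !qfDl !qfDr !qfZl !qfZr xWh -/a -/b a_real rmorphN.
have -> : a * (a * qf x W x) + a * (- b * b^*) + (- b^* * (a * b) + - b^* * (- b * a))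
   = a * (qf x W x * a - b * b^*) by ring.
by rewrite pmulr_rge0 // subr_ge0 normCK conjCK mulrC.
Qed.

End QuadraticForms.

Section RankOneExtraction.
Variables (C : numClosedFieldType) (m : nat) (W : 'M[C]_m) (h : 'cV[C]_m).

Definition extract : 'cV[C]_m := (sqrtC (qf h W h))^-1 *: (W *m h).

Hypothesis psdW : psd W.
Hypothesis signal_gt0 : 0 < qf h W h.

Lemma extract_qf x : `|qf x 1%:M extract| ^+ 2 = `|qf x W h| ^+ 2 / qf h W h.
Proof.
rewrite /extract qfZr -qf_Mr normrM exprMn normfV.
by rewrite [`|sqrtC _|]ger0_norm ?sqrtC_ge0 ?ltW // exprVn sqrtCK mulrC.
Qed.

Lemma extract_signal : `|qf h 1%:M extract| ^+ 2 = qf h W h.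
Proof.
by rewrite extract_qf ger0_norm ?ltW // expr2 mulfK // gt_eqF.
Qed.

Lemma psd_sub_extract : psd (W - extract *m ctr extract).
Proof.
case: psdW => hW _; split; first by rewrite /Defs.hermitian ctrD ctrN ctrM ctrK hW.
move=> x; rewrite -/(qf _ _ _) qfB qf_outer extract_qf subr_ge0.
by rewrite ler_pdivrMr // psd_cauchy_schwarz.
Qed.

End RankOneExtraction.

Lemma sinr_trace_form (F : numFieldType) (g s a t : F) : 0 < g ->
  (s <= (1 + g^-1) * a - t) = (g * (t - a + s) <= a).
Proof.
move=> g_gt0; rewrite -subr_ge0 -[RHS]subr_ge0.
have -> : (1 + g^-1) * a - t - s = g^-1 * (a - g * (t - a + s)).
  by field; rewrite gt_eqF.
by rewrite pmulr_rge0 // invr_gt0.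
Qed.

Section Relaxation.
Variables (C : numClosedFieldType) (N M K : nat).
Variables (G : 'M[C]_(N, M)) (v : 'rV[C]_N).
Variables (hd : 'I_K -> 'cV[C]_M) (hr : 'I_K -> 'cV[C]_N).
Variables (Gamma sigma2 : 'I_K -> C) (P0 : C).
Hypothesis Gamma_gt0 : forall k, 0 < Gamma k.
Hypothesis sigma2_gt0 : forall k, 0 < sigma2 k.

Local Notation hk k := (heff G v (hd k) (hr k)).

Definition outer (w : 'I_K -> 'cV[C]_M) (k : 'I_K) : 'M[C]_M := w k *m ctr (w k).

Definition total (W : 'I_K -> 'M[C]_M) (R0 : 'M[C]_M) : 'M[C]_M := \sum_k W k + R0.

Definition interference (W : 'I_K -> 'M[C]_M) (R0 : 'M[C]_M) (k : 'I_K) : C :=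
  qf (hk k) (total W R0) (hk k) - qf (hk k) (W k) (hk k).

Lemma interferenceE W R0 k : interference W R0 k =
  \sum_(i | i != k) qf (hk k) (W i) (hk k) + qf (hk k) R0 (hk k).
Proof.
by rewrite /interference /total qfD qf_sum (bigD1 k) //=; ring.
Qed.

Lemma interference_ge0 W R0 k :
  (forall i, psd (W i)) -> psd R0 -> 0 <= interference W R0 k.
Proof.
move=> psdW psdR; rewrite interferenceE addr_ge0 ?psd_ge0 //.
by apply: sumr_ge0 => i _; apply: psd_ge0.
Qed.

Lemma sdr_sinrE W R0 k :
  (sigma2 k <= (1 + (Gamma k)^-1) * \tr (hk k *m ctr (hk k) *m W k)
               - \tr (hk k *m ctr (hk k) *m (\sum_i W i + R0)))
  = (Gamma k * (interference W R0 k + sigma2 k) <= qf (hk k) (W k) (hk k)).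
Proof. by rewrite !tr_outer sinr_trace_form. Qed.

Lemma p11_sinrE w R0 k : psd R0 ->
  (Gamma k <= sinrI (hk k) w R0 (sigma2 k) k)
  = (Gamma k * (interference (outer w) R0 k + sigma2 k)
       <= qf (hk k) (outer w k) (hk k)).
Proof.
move=> psdR; have denom_gt0 : 0 < interference (outer w) R0 k + sigma2 k.
  by rewrite ltr_wpDl // interference_ge0 // => i; apply: psd_outer.
rewrite /sinrI -ler_pdivlMr // interferenceE qf_outer.
by congr (_ <= _ / (_ + _ + _)); apply: eq_bigr => i _; rewrite qf_outer.
Qed.

Lemma p11_powerE w R0 : \sum_k norm2 (w k) + \tr R0 = \tr (total (outer w) R0).
Proof.
rewrite /total linearD /= linear_sum /=.
by congr (_ + _); apply: eq_bigr => i _; rewrite tr_outer_norm2.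
Qed.

Lemma sdr_powerE W R0 : \sum_k \tr (W k) + \tr R0 = \tr (total W R0).
Proof. by rewrite /total linearD /= linear_sum. Qed.

Lemma feasible_SDR_outer w R0 :
  feasible_P11 G v hd hr Gamma sigma2 P0 w R0 ->
  feasible_SDR G v hd hr Gamma sigma2 P0 (outer w) R0.
Proof.
move=> [psdR [sinr power]]; split; first by move=> k; apply: psd_outer.
split=> //; split; last by rewrite sdr_powerE -p11_powerE.
by move=> k /=; rewrite sdr_sinrE -p11_sinrE.
Qed.

Lemma obj_P11_outer w R0 : obj_P11 G w R0 = obj_SDR G (outer w) R0.
Proof. by []. Qed.

Lemma sdr_signal_gt0 W R0 : feasible_SDR G v hd hr Gamma sigma2 P0 W R0 ->
  forall k, 0 < qf (hk k) (W k) (hk k).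
Proof.
move=> [psdW [psdR [sinr _]]] k; move: (sinr k) => /=; rewrite sdr_sinrE.
apply: lt_le_trans; rewrite pmulr_rgt0 // ltr_wpDl //.
exact: interference_ge0.
Qed.

Section RankOneSolution.
Variables (W : 'I_K -> 'M[C]_M) (R0 : 'M[C]_M).

Local Notation wo := (wopt G v hd hr W).
Local Notation Ro := (R0opt G v hd hr W R0).

Lemma extraction_total : total (outer wo) Ro = total W R0.
Proof. by rewrite /total /R0opt addrC subrK addrC. Qed.

Lemma extraction_obj : obj_P11 G wo Ro = obj_SDR G W R0.
Proof. by rewrite obj_P11_outer /obj_SDR -[\sum_k _ + _]/(total _ _) extraction_total. Qed.

Lemma wopt_extract k : wo k = extract (W k) (hk k).
Proof. by []. Qed.

Hypothesis feasW : feasible_SDR G v hd hr Gamma sigma2 P0 W R0.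

(* Feasibility makes every a_k positive, so the extraction keeps the signals. *)
Lemma extraction_signal k :
  qf (hk k) (outer wo k) (hk k) = qf (hk k) (W k) (hk k).
Proof. by rewrite qf_outer wopt_extract extract_signal // (sdr_signal_gt0 feasW). Qed.

(* Same total covariance and same signals, hence the same interference. *)
Lemma extraction_interference k :
  interference (outer wo) Ro k = interference W R0 k.
Proof. by rewrite /interference extraction_total extraction_signal. Qed.

(* R0opt = R0 + sum_k (W_k - w_k w_k^H) is a sum of PSD matrices. *)
Lemma psd_R0opt : psd Ro.
Proof.
have [psdW [psdR _]] := feasW; rewrite /R0opt -addrA -sumrB.
apply: psdD => //; apply: psd_sum => k _; rewrite wopt_extract.
exact: psd_sub_extract (sdr_signal_gt0 feasW k).
Qed.

Lemma feasible_P11_extraction : feasible_P11 G v hd hr Gamma sigma2 P0 wo Ro.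
Proof.
have [_ [_ [sinr power]]] := feasW; split; first exact: psd_R0opt.
split; last by rewrite p11_powerE extraction_total -sdr_powerE.
move=> k; rewrite p11_sinrE; last exact: psd_R0opt.
rewrite extraction_interference extraction_signal.
by move: (sinr k) => /=; rewrite sdr_sinrE.
Qed.

End RankOneSolution.
End Relaxation.

Theorem proposition1 (C : numClosedFieldType) (M N K : nat)
  (HM : (0 < M)%N) (HN : (0 < N)%N) (HK : (0 < K)%N)
  (G : 'M[C]_(N, M)) (hd : 'I_K -> 'cV[C]_M) (hr : 'I_K -> 'cV[C]_N)
  (Gamma sigma2 : 'I_K -> C) (P0 : C)
  (HGamma : forall k, 0 < Gamma k) (Hsigma : forall k, 0 < sigma2 k)
  (HP0 : 0 < P0)
  (v : 'rV[C]_N) (Hv : unimodular v)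
  (Wst : 'I_K -> 'M[C]_M) (R0st : 'M[C]_M)
  (Hopt : optimal_SDR G v hd hr Gamma sigma2 P0 Wst R0st) :
  (forall k, 0 < qf (heff G v (hd k) (hr k)) (Wst k) (heff G v (hd k) (hr k))) /\
  psd (R0opt G v hd hr Wst R0st) /\
  optimal_P11 G v hd hr Gamma sigma2 P0 (wopt G v hd hr Wst) (R0opt G v hd hr Wst R0st) /\
  obj_P11 G (wopt G v hd hr Wst) (R0opt G v hd hr Wst R0st) = obj_SDR G Wst R0st.
Proof.
case: Hopt => feas minimal.
split; first exact (sdr_signal_gt0 HGamma Hsigma feas).
split; first exact (psd_R0opt HGamma Hsigma feas).
split; last exact: extraction_obj.
split; first exact (feasible_P11_extraction HGamma Hsigma feas).
(* any (w, R0) feasible for (P1.1) lifts to (SDR1.2) with the same value *)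
move=> w R0 feasP; rewrite extraction_obj obj_P11_outer.
exact/minimal/feasible_SDR_outer.
Qed.
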